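(* Fix integers $m \ge 1$ and $n_1,\dots,n_m \ge 2$, and consider the $m$-dimensional single parity-check product code transmitted over the binary erasure channel with erasure probability $\epsilon \in [0,1]$. Let $P_{\mathrm{SC}}$ be its block error probability under successive cancellation decoding and $P_{\mathrm{E}}$ its block error probability under Elias' decoding (both defined in the context). Then \[ P_{\mathrm{SC}} \le P_{\mathrm{E}}. \]
   Context: Index set and code. Let $A = \{1,\dots,n_1\}\times\cdots\times\{1,\dots,n_m\}$. The code is the set of binary arrays $x: A \to \{0,1\}$ in which every line in every direction $\ell$ has even weight; a line in direction $\ell$ is obtained by fixing all coordinates except the $\ell$-th. This is the product of the $(n_\ell, n_\ell-1)$ single parity-check codes. Its information positions are $A_{\mathrm{info}} = \{a : a_\ell \le n_\ell-1 \text{ for all } \ell\}$. Channel. Each entry is independently erased with probability $\epsilon$ and otherwise received correctly. Notation. For $\ell = 0,\dots,m$ let $A_\ell = \{a \in A : a_i \le n_i-1 \text{ for } i \le \ell\}$. For $a \in A$ and $b \in \{1,\dots,n_\ell\}$, let $a[\ell\leftarrow b]$ denote $a$ with its $\ell$-th coordinate replaced by $b$. Set $E_0(a) = S_0(a) = $ ''entry $a$ is not erased''. Elias' decoder. This is a one-sweep decoder over dimensions $1,\dots,m$. For $\ell \ge 1$ and $a \in A_\ell$, $E_\ell(a)$ is true iff $E_{\ell-1}(a)$ is true, or $E_{\ell-1}(a[\ell\leftarrow b])$ is true for all $b \in \{1,\dots,n_\ell\}\setminus\{a_\ell\}$. Then $P_{\mathrm{E}} = \Pr[\exists\, a \in A_{\mathrm{info}}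 : E_m(a) \text{ false}]$. Successive cancellation decoder. Information bits are decoded in lexicographic order of $(a_1,\dots,a_m)$, and local SPC decisions exploit previously decided bits; over the erasure channel decisions are never wrong, only erased. Its block error event coincides with the following. For $\ell \ge 1$ and $a \in A_\ell$, $S_\ell(a)$ is true iff $S_{\ell-1}(a)$ is true, or $S_{\ell-1}(a[\ell\leftarrow b])$ is true for all $b$ with $a_\ell < b \le n_\ell$. Then $P_{\mathrm{SC}} = \Pr[\exists\, a \in A_{\mathrm{info}} : S_m(a) \text{ false}]$. *)

From mathcomp Require Import all_boot all_order all_algebra.
Set Implicit Arguments. Unset Strict Implicit. Unset Printing Implicit Defensive.
Import Order.TTheory GRing.Theory Num.Theory.

(* Coordinates are 0-based: the paper's coordinate a_l in {1..n_l} is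
   represented by a l in {0..n_l - 1}.  Positions are functions
   'I_m -> 'I_(Nmax n) where Nmax n = max_l n_l; the index set A is the set
   of those with a l < n l for every l. *)

Section SPC.
Variables (m : nat) (n : 'I_m -> nat).

Definition Nmax : nat := \max_(l < m) n l.
Definition pos := {ffun 'I_m -> 'I_Nmax}.

Definition Aset : {set pos} := [set a : pos | [forall l, a l < n l]].
(* information positions: a_l <= n_l - 1 (1-based), i.e. a l < n l - 1 (0-based) *)
Definition Ainfo : {set pos} := [set a : pos | [forall l, (a l).+1 < n l]].

Definition upd (a : pos) (l : 'I_m) (b : 'I_Nmax) : pos :=
  [ffun j => if j == l then b else a j].

Definition Estep (l : 'I_m) (P : pos -> bool) (a : pos) : bool :=
  P a || [forall b : 'I_Nmax, ((b < n l) && (b != a l)) ==> P (upd a l b)].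

Definition Sstep (l : 'I_m) (P : pos -> bool) (a : pos) : bool :=
  P a || [forall b : 'I_Nmax, ((a l < b) && (b < n l)) ==> P (upd a l b)].

(* E_0 = S_0 = "not erased"; e is the set of erased entries. *)
Definition notErased (e : {set pos}) (a : pos) : bool := a \notin e.

(* E_m and S_m: sweep over dimensions 1..m in order (enum 'I_m is increasing). *)
Definition E_m (e : {set pos}) : pos -> bool :=
  foldl (fun P l => Estep l P) (notErased e) (enum 'I_m).
Definition S_m (e : {set pos}) : pos -> bool :=
  foldl (fun P l => Sstep l P) (notErased e) (enum 'I_m).

(* Probability, under the BEC with erasure probability eps (each entry of A
   erased independently), of an event on erasure patterns e \subset A. *)
Definition prob (R : numDomainType) (eps : R) (ev : {set pos} -> bool) : R :=
  \sum_(e : {set pos} | (e \subset Aset) && ev e)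
     eps ^+ #|e| * (1 - eps) ^+ (#|Aset| - #|e|).

Definition P_E (R : numDomainType) (eps : R) : R :=
  prob eps (fun e => [exists a in Ainfo, ~~ E_m e a]).
Definition P_SC (R : numDomainType) (eps : R) : R :=
  prob eps (fun e => [exists a in Ainfo, ~~ S_m e a]).
End SPC.

From mathcomp Require Import all_boot all_order all_algebra.
Import Order.TTheory GRing.Theory Num.Theory.
Local Open Scope ring_scope.

(* Every erasure pattern that Elias' decoder corrects is also corrected by SC:
   the SC step only requires the entries a[l <- b] with b > a_l, a subset of
   those Elias' step requires, and it may use the (larger) SC predicate of the
   previous dimension.  Hence the SC error event is contained in the Elias
   error event, and the probability of events is monotone. *)

Section Decoders.
Variables (m : nat) (n : 'I_m -> nat).

Lemma Sstep_of_Estep l (P Q : pos n -> bool) :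
  subpred P Q -> subpred (Estep l P) (Sstep l Q).
Proof.
rewrite /Estep /Sstep => PQ a /orP[/PQ -> // | /forallP Eall]; apply/orP; right.
apply/forallP=> b; apply/implyP=> /andP[alb bn]; apply: PQ.
have b_neq : b != a l by apply: contraTneq alb => ->; rewrite ltnn.
by have := Eall b; rewrite bn b_neq.
Qed.

Lemma foldl_Sstep_of_Estep (s : seq 'I_m) (P Q : pos n -> bool) :
  subpred P Q ->
  subpred (foldl (fun P l => Estep l P) P s) (foldl (fun P l => Sstep l P) Q s).
Proof.
elim: s P Q => [|l s IHs] P Q PQ //=.
by apply: IHs; apply: Sstep_of_Estep.
Qed.

Lemma S_m_of_E_m (e : {set pos n}) : subpred (E_m e) (S_m e).
Proof. exact: foldl_Sstep_of_Estep. Qed.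

Lemma prob_le (R : numDomainType) (eps : R) (ev1 ev2 : {set pos n} -> bool) :
  0 <= eps <= 1 -> subpred ev1 ev2 -> prob eps ev1 <= prob eps ev2.
Proof.
move=> /andP[eps_ge0 eps_le1] ev12.
rewrite /prob [leLHS]big_mkcond [leRHS]big_mkcond /=.
apply: ler_sum => e _; case: (e \subset Aset n) => //=.
have weight_ge0 : 0 <= eps ^+ #|e| * (1 - eps) ^+ (#|Aset n| - #|e|).
  by rewrite mulr_ge0 ?exprn_ge0 ?subr_ge0.
by case: (boolP (ev1 e)) => [/ev12 -> | _] //; case: ifP.
Qed.

End Decoders.

Theorem theorem2 (R : realFieldType) (m : nat) (n : 'I_m -> nat) (eps : R) :
  (1 <= m)%N -> (forall l, 2 <= n l)%N -> 0 <= eps <= 1 ->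
  P_SC n eps <= P_E n eps.
Proof.
move=> _ _ eps01; apply: prob_le => // e /existsP[a /andP[a_info a_SC]].
by apply/existsP; exists a; rewrite a_info; apply: contra a_SC; apply: S_m_of_E_m.
Qed.
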